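(* For a topologically reasonable pointclass $\Gamma$, if every set in $\Gamma$ is strongly $u$-regular, then every set in $\Gamma$ is $\ell$-regular.
   Context: A set $A\subseteq\omega^\omega$ is dominating if for every $g\in\omega^\omega$ there is $x\in A$ with $g(n)\le x(n)$ for all but finitely many $n$. $A$ is strongly dominating if for every $f\in\omega^\omega$ there is $x\in A$ with $f(x(k-1))<x(k)$ for all but finitely many $k$. A Laver tree is a tree $L\subseteq\omega^{<\omega}$ all of whose nodes extending the stem have infinitely many immediate successors. $A$ is $\ell$-regular if either $A$ contains $[L]$ for some Laver tree $L$, or $A$ is not strongly dominating. A nice set: let $\bar W=\langle w_\sigma,s_\sigma:\sigma\in\omega^{<\omega}\rangle$ be such that $\mathrm{dom}(s_{\langle\rangle})$ and each $w_\sigma$ are finite subsets of $\omega$; $s_{\langle\rangle}:\mathrm{dom}(s_{\langle\rangle})\to\omega$ and for $\sigma\neq\langle\rangle$, $s_\sigma:w_{\sigma{\restriction}(|\sigma|-1)}\to\omega$; for every $f\in\omega^\omega$, $\omega=\mathrm{dom}(s_{\langle\rangle})\cup\bigcup_n w_{f{\restriction}n}$ with the union pairwise disjoint; and $s_\sigma(i)>\sigma(|\sigma|-1)$ for all $\sigma\ne\langle\rangle$ and $i\in w_{\sigma{\restriction}(|\sigma|-1)}$. Then $C(\bar W)=\{\bigcup_n s_{f{\restriction}n}: f\in\omega^\omega\}$ is called a nice set. $A$ is strongly $u$-regular if either $A$ contains a nice set or $A$ is not dominating. A pointclass $\Gamma$ is topologically reasonable if it is closed under continuous preimages and $A\cap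 Q\in\Gamma$ whenever $A\in\Gamma$ and $Q$ is closed. *)

From Stdlib Require Import List Arith.
Import ListNotations.

Definition baire := nat -> nat.
Definition pointset := baire -> Prop.
Definition pointclass := pointset -> Prop.

Definition restr (f : baire) (n : nat) : list nat := map f (seq 0 n).

Definition baire_continuous (F : baire -> baire) : Prop :=
  forall (x : baire) (n : nat), exists m : nat,
    forall y : baire, restr y m = restr x m -> restr (F y) n = restr (F x) n.

Definition baire_closed (Q : pointset) : Prop :=
  forall x : baire, ~ Q x -> exists n : nat,
    forall y : baire, restr y n = restr x n -> ~ Q y.

Definition topologically_reasonable (G : pointclass) : Prop :=
  (forall (A : pointset) (F : baire -> baire),
      G A -> baire_continuous F -> G (fun x => A (F x))) /\
  (forall A Q : pointset, G A -> baire_closed Q -> G (fun x => A x /\ Q x)).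

Definition dominating (A : pointset) : Prop :=
  forall g : baire, exists x : baire, A x /\
    exists N : nat, forall n, N <= n -> g n <= x n.

(* f(x(k-1)) < x(k) for all but finitely many k (written with k := k'+1) *)
Definition strongly_dominating (A : pointset) : Prop :=
  forall f : baire, exists x : baire, A x /\
    exists N : nat, forall k, N <= k -> f (x k) < x (S k).

Definition is_prefix (s t : list nat) : Prop := exists u, t = s ++ u.

Definition is_tree (L : list nat -> Prop) : Prop :=
  forall s t, L t -> is_prefix s t -> L s.

Definition laver_tree (L : list nat -> Prop) : Prop :=
  is_tree L /\
  exists stem : list nat, L stem /\
    (forall t, L t -> is_prefix t stem \/ is_prefix stem t) /\
    (forall t, L t -> is_prefix stem t ->
       forall N : nat, exists n : nat, N <= n /\ L (t ++ [n])).

Definition body (L : list nat -> Prop) : pointset :=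
  fun x => forall n, L (restr x n).

Definition l_regular (A : pointset) : Prop :=
  (exists L, laver_tree L /\ forall x, body L x -> A x)
  \/ ~ strongly_dominating A.

(* Data: dom0 = dom(s_<>), w sigma = w_sigma, s sigma = s_sigma
   (a function on nat whose values are only relevant on its domain, which is
   dom0 for sigma = <> and w (sigma restricted to |sigma|-1) otherwise). *)
Definition finite_set (P : nat -> Prop) : Prop :=
  exists N, forall i, P i -> i < N.

Definition nice_data (dom0 : nat -> Prop) (w : list nat -> nat -> Prop)
    (s : list nat -> nat -> nat) : Prop :=
  finite_set dom0 /\
  (forall sigma, finite_set (w sigma)) /\
  (forall f : baire,
     (forall i, dom0 i \/ exists n, w (restr f n) i) /\
     (forall i n, ~ (dom0 i /\ w (restr f n) i)) /\
     (forall i n m, w (restr f n) i -> w (restr f m) i -> n = m)) /\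
  (forall sigma, sigma <> [] ->
     forall i, w (removelast sigma) i -> last sigma 0 < s sigma i).

Definition nice_set (dom0 : nat -> Prop) (w : list nat -> nat -> Prop)
    (s : list nat -> nat -> nat) : pointset :=
  fun x => exists f : baire, forall i,
    (dom0 i -> x i = s [] i) /\
    (forall n, w (restr f n) i -> x i = s (restr f (S n)) i).

Definition strongly_u_regular (A : pointset) : Prop :=
  (exists dom0 w s, nice_data dom0 w s /\ forall x, nice_set dom0 w s x -> A x)
  \/ ~ dominating A.

(* Let [A] in the pointclass be strongly dominating.  The continuous map [chain] reads
   [y] along pointers, [chain y (k+1) = y (1 + <k, chain y k>)]; the preimage of [A] under
   it is dominating, hence contains a nice set [C(W)].  Inside [chain[C(W)]] we find the
   body of a Laver tree by building [f] and [y = U s_(f|n)] along [chain]: a position of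
   [y] already fixed by the current approximation of [f] forces the next value, and
   otherwise [f] can be extended so as to put any of infinitely many increasing values
   there, each above every position fixed so far, so that the next position read is
   again free.  The stem consists of the forced values before the first free choice. *)

From Stdlib Require Import List Arith Lia Cantor FunctionalExtensionality ClassicalEpsilon Wf_nat.
Import ListNotations.

Lemma restr_length f n : length (restr f n) = n.
Proof. unfold restr. now rewrite length_map, length_seq. Qed.

Lemma nth_restr f n i d : i < n -> nth i (restr f n) d = f i.
Proof.
  intros Hi. unfold restr.
  rewrite nth_indep with (d' := f 0) by (rewrite length_map, length_seq; lia).
  now rewrite map_nth, seq_nth by lia.
Qed.

Lemma restr_ext f g n : (forall i, i < n -> f i = g i) -> restr f n = restr g n.
Proof.
  intros H. apply map_ext_in. intros i Hi. apply in_seq in Hi. apply H. lia.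
Qed.

Lemma restr_eq_at f g n i : restr f n = restr g n -> i < n -> f i = g i.
Proof.
  intros H Hi. rewrite <- (nth_restr f n i 0 Hi), <- (nth_restr g n i 0 Hi). now rewrite H.
Qed.

Lemma restr_S f n : restr f (S n) = restr f n ++ [f n].
Proof. unfold restr. now rewrite seq_S, map_app. Qed.

Lemma restr_add f n m : restr f (n + m) = restr f n ++ map f (seq n m).
Proof. unfold restr. now rewrite seq_app, map_app. Qed.

Lemma is_prefix_trans a b c : is_prefix a b -> is_prefix b c -> is_prefix a c.
Proof. intros [u ->] [v ->]. exists (u ++ v). now rewrite app_assoc. Qed.

Lemma is_prefix_length a b : is_prefix a b -> length a <= length b.
Proof. intros [u ->]. rewrite length_app. lia. Qed.

Lemma is_prefix_nth a b i d : is_prefix a b -> i < length a -> nth i a d = nth i b d.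
Proof. intros [u ->] Hi. now rewrite app_nth1. Qed.

Lemma is_prefix_restr f m n : m <= n -> is_prefix (restr f m) (restr f n).
Proof.
  intros Hmn. exists (map f (seq m (n - m))). rewrite <- restr_add. f_equal. lia.
Qed.

Lemma is_prefix_restr_inv f a n : is_prefix a (restr f n) -> a = restr f (length a).
Proof.
  intros H. pose proof (is_prefix_length _ _ H) as Hl. rewrite restr_length in Hl.
  apply nth_ext with 0 0; [now rewrite restr_length|].
  intros i Hi. rewrite nth_restr by exact Hi.
  rewrite (is_prefix_nth _ _ i 0 H Hi). apply nth_restr. lia.
Qed.

Definition code (k v : nat) : nat := Cantor.to_nat (k, v).

Lemma code_ge k v : k <= code k v /\ v <= code k v.
Proof. unfold code. pose proof (to_nat_non_decreasing k v). lia. Qed.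

Fixpoint chain (y : baire) (k : nat) : nat :=
  match k with
  | 0 => y 0
  | S k => y (S (code k (chain y k)))
  end.

Definition chain_index (y : baire) (k : nat) : nat :=
  match k with 0 => 0 | S k => S (code k (chain y k)) end.

Fixpoint max_upto (h : nat -> nat) (n : nat) : nat :=
  match n with 0 => h 0 | S n => max (max_upto h n) (h (S n)) end.

Lemma le_max_upto h n j : j <= n -> h j <= max_upto h n.
Proof.
  induction n as [|n IH]; intros Hj; simpl.
  - now replace j with 0 by lia.
  - destruct (Nat.eq_dec j (S n)) as [->|Hne]; [lia|].
    specialize (IH ltac:(lia)). lia.
Qed.

Lemma chain_continuous : baire_continuous chain.
Proof.
  intros x n. exists (S (max_upto (chain_index x) n)). intros y Hy.
  assert (Hk : forall k, k <= n -> chain y k = chain x k).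
  { induction k as [|k IH]; intros Hk.
    - apply (restr_eq_at _ _ _ _ Hy). lia.
    - change (y (S (code k (chain y k))) = x (chain_index x (S k))).
      rewrite IH by lia. apply (restr_eq_at _ _ _ _ Hy).
      pose proof (le_max_upto (chain_index x) n (S k) Hk). simpl in *. lia. }
  apply restr_ext. intros i Hi. apply Hk. lia.
Qed.

Lemma linear_growth (x : baire) N : (forall k, N <= k -> x k + 1 < x (S k)) ->
  forall k, 2 * N <= k -> k <= x k.
Proof.
  intros Hx.
  assert (H : forall j, 2 * j <= x (N + j)).
  { induction j as [|j IH]; [lia|].
    specialize (Hx (N + j) ltac:(lia)). rewrite Nat.add_succ_r. lia. }
  intros k Hk. specialize (H (k - N)). replace (N + (k - N)) with k in H by lia. lia.
Qed.

Lemma dominating_chain_preimage (A : pointset) :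
  strongly_dominating A -> dominating (fun y => A (chain y)).
Proof.
  intros HA g.
  (* The maximum makes [x (S k)] dominate [g] at every [S (code j (x k))] with
     [j <= x k]; the summand [v + 1] makes [x] grow so that [j = k] is among them. *)
  destruct (HA (fun v => max_upto (fun j => g (S (code j v))) v + v + 1)) as [x [Ax [N HN]]].
  (* [y] stores [x (S k)] where [chain] reads after [x k], and copies [g] elsewhere. *)
  set (y := fun i => match i with
                     | 0 => x 0
                     | S q => let (k, v) := Cantor.of_nat q in
                              if v =? x k then x (S k) else g i
                     end).
  assert (Hchain : forall k, chain y k = x k).
  { induction k as [|k IH]; [reflexivity|].
    simpl. rewrite IH. unfold y, code. now rewrite cancel_of_to, Nat.eqb_refl. }
  exists y. split.
  { replace (chain y) with x; [exact Ax|]. apply functional_extensionality. intros k.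
    now rewrite Hchain. }
  assert (Hgrow : forall k, 2 * N <= k -> k <= x k).
  { apply linear_growth. intros k Hk. specialize (HN k Hk). cbv beta in HN. lia. }
  exists (S (max_upto (fun k => S (code k (x k))) (2 * N))). intros n Hn.
  destruct n as [|q]; [lia|].
  unfold y. destruct (Cantor.of_nat q) as [k v] eqn:Hq.
  destruct (Nat.eqb_spec v (x k)) as [->|]; [|lia].
  assert (Eq : q = code k (x k)) by (unfold code; rewrite <- Hq; now rewrite cancel_to_of).
  subst q.
  destruct (le_lt_dec (2 * N) k) as [Hk|Hk].
  - specialize (HN k ltac:(lia)).
    pose proof (le_max_upto (fun j => g (S (code j (x k)))) (x k) k (Hgrow k Hk)).
    cbv beta in *. lia.
  - pose proof (le_max_upto (fun k => S (code k (x k))) (2 * N) k ltac:(lia)).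
    cbv beta in *. lia.
Qed.

Definition pad (sg : list nat) : baire := fun i => nth i sg 0.

Lemma restr_pad t : restr (pad t) (length t) = t.
Proof.
  apply nth_ext with 0 0; rewrite ?restr_length; auto.
  intros i Hi. now rewrite nth_restr.
Qed.

Lemma restr_pad_snoc t a j : j <= length t -> restr (pad (t ++ [a])) j = restr (pad t) j.
Proof. intros Hj. apply restr_ext. intros i Hi. unfold pad. apply app_nth1. lia. Qed.

Definition extends (f : baire) (sg : list nat) : Prop :=
  forall i, i < length sg -> f i = nth i sg 0.

Lemma restr_pad_extends f sg j : extends f sg -> j <= length sg -> restr f j = restr (pad sg) j.
Proof. intros Hf Hj. apply restr_ext. intros i Hi. apply Hf. lia. Qed.

Lemma prefix_chain_limit (L : nat -> list nat) (h : nat -> nat) :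
  (forall k k', k <= k' -> is_prefix (L k) (L k')) ->
  (forall i, i < length (L (h i))) ->
  exists f, forall k, extends f (L k).
Proof.
  intros Hmono Hh. exists (fun i => nth i (L (h i)) 0). intros k i Hi.
  destruct (le_ge_dec k (h i)) as [Hk|Hk].
  - symmetry. apply is_prefix_nth; auto.
  - apply is_prefix_nth; auto.
Qed.

Section NiceSet.
Variables (dom0 : nat -> Prop) (w : list nat -> nat -> Prop) (s : list nat -> nat -> nat).
Hypothesis Hnice : nice_data dom0 w s.

Lemma nice_cover f i : ~ dom0 i -> exists n, w (restr f n) i.
Proof.
  destruct Hnice as [_ [_ [H _]]]. destruct (H f) as [Hcov _].
  intros Hi. destruct (Hcov i); tauto.
Qed.

Lemma nice_disjoint f i n : dom0 i -> w (restr f n) i -> False.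
Proof.
  destruct Hnice as [_ [_ [H _]]]. destruct (H f) as [_ [Hdisj _]].
  intros. eapply Hdisj; eauto.
Qed.

Lemma nice_level_unique f i n m : w (restr f n) i -> w (restr f m) i -> n = m.
Proof. destruct Hnice as [_ [_ [H _]]]. destruct (H f) as [_ [_ Huniq]]. eauto. Qed.

Lemma nice_snoc_gt t a p : w t p -> a < s (t ++ [a]) p.
Proof.
  destruct Hnice as [_ [_ [_ H]]]. intros Hw.
  rewrite <- (last_last t a 0) at 1. apply H.
  - now destruct t.
  - now rewrite removelast_last.
Qed.

Lemma nice_bound (h : nat -> list nat) n : exists B, forall q,
  (dom0 q \/ exists j, j <= n /\ w (h j) q) -> q < B.
Proof.
  destruct Hnice as [[N0 HN0] [Hw _]].
  induction n as [|n [B HB]].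
  - destruct (Hw (h 0)) as [M HM]. exists (N0 + M).
    intros q [Hq|[j [Hj Hq]]].
    + specialize (HN0 q Hq). lia.
    + replace j with 0 in Hq by lia. specialize (HM q Hq). lia.
  - destruct (Hw (h (S n))) as [M HM]. exists (B + M).
    intros q [Hq|[j [Hj Hq]]].
    + specialize (HB q (or_introl Hq)). lia.
    + destruct (Nat.eq_dec j (S n)) as [->|Hne].
      * specialize (HM q Hq). lia.
      * enough (q < B) by lia. apply HB. right. exists j. split; [lia|auto].
Qed.

(* The unique [n] with [i] in [w (f|n)] when [i] is not in [dom0]; junk otherwise. *)
Definition level (f : baire) (i : nat) : nat :=
  epsilon (inhabits 0) (fun n => w (restr f n) i).

Lemma level_eq f i n : w (restr f n) i -> level f i = n.
Proof.
  intros Hn. apply (nice_level_unique f i); [|exact Hn].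
  unfold level. apply epsilon_spec. eauto.
Qed.

Definition nice_point (f : baire) : baire := fun i =>
  if excluded_middle_informative (dom0 i) then s [] i
  else s (restr f (S (level f i))) i.

Lemma nice_point_in_nice_set f : nice_set dom0 w s (nice_point f).
Proof.
  exists f. intros i. unfold nice_point. split.
  - intros Hi. now destruct (excluded_middle_informative (dom0 i)).
  - intros n Hn. destruct (excluded_middle_informative (dom0 i)) as [Hi|_].
    + destruct (nice_disjoint f i n Hi Hn).
    + now rewrite (level_eq f i n Hn).
Qed.

Lemma nice_point_level f i n : w (restr f n) i -> nice_point f i = s (restr f (S n)) i.
Proof.
  intros Hn. unfold nice_point. destruct (excluded_middle_informative (dom0 i)) as [Hi|_].
  - destruct (nice_disjoint f i n Hi Hn).
  - now rewrite (level_eq f i n Hn).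
Qed.

Definition determined (sg : list nat) (i : nat) : Prop :=
  dom0 i \/ exists j, j < length sg /\ w (restr (pad sg) j) i.

Lemma nice_point_determined f sg i : determined sg i -> extends f sg ->
  nice_point f i = nice_point (pad sg) i.
Proof.
  intros [Hi|[j [Hj Hw]]] Hf.
  - unfold nice_point. now destruct (excluded_middle_informative (dom0 i)).
  - rewrite (nice_point_level (pad sg) i j Hw).
    rewrite <- (restr_pad_extends f sg j Hf) in Hw by lia.
    rewrite (nice_point_level f i j Hw). f_equal. now apply restr_pad_extends.
Qed.

Lemma level_undetermined sg i : ~ determined sg i ->
  w (restr (pad sg) (level (pad sg) i)) i /\ length sg <= level (pad sg) i.
Proof.
  intros Hund. assert (Hi : ~ dom0 i) by (intro; apply Hund; now left).
  destruct (nice_cover (pad sg) i Hi) as [n Hn].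
  rewrite (level_eq _ _ _ Hn). split; [exact Hn|].
  destruct (le_lt_dec (length sg) n) as [|Hlt]; [auto|].
  exfalso. apply Hund. right. eauto.
Qed.

Definition bound (t : list nat) : nat :=
  epsilon (inhabits 0) (fun B => forall a q, determined (t ++ [a]) q -> q < B).

Lemma determined_snoc_lt_bound t a q : determined (t ++ [a]) q -> q < bound t.
Proof.
  revert a q. unfold bound. apply epsilon_spec.
  destruct (nice_bound (restr (pad t)) (length t)) as [B HB].
  exists B. intros a q [Hq|[j [Hj Hw]]]; apply HB; [now left|right].
  rewrite length_app in Hj. simpl in Hj.
  exists j. split; [lia|]. now rewrite <- (restr_pad_snoc t a j) by lia.
Qed.

(* Candidate extensions [t ++ [a]] of [t]: each candidate's value at [p] is the next
   candidate, so the values at [p] increase strictly. *)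
Fixpoint ladder (t : list nat) (p B m : nat) : nat :=
  match m with 0 => B | S m => s (t ++ [ladder t p B m]) p end.

Lemma ladder_lt_S t p B m : w t p -> ladder t p B m < ladder t p B (S m).
Proof. intros Hw. apply nice_snoc_gt, Hw. Qed.

Lemma ladder_ge t p B m : w t p -> B + m <= ladder t p B m.
Proof.
  intros Hw. induction m as [|m IH]; [simpl; lia|].
  pose proof (ladder_lt_S t p B m Hw). lia.
Qed.

Lemma ladder_inj t p B m m' : w t p -> ladder t p B m = ladder t p B m' -> m = m'.
Proof.
  intros Hw.
  assert (Hmono : forall m m', m < m' -> ladder t p B m < ladder t p B m').
  { intros n n' Hn. induction Hn as [|n' Hn IH].
    - now apply ladder_lt_S.
    - pose proof (ladder_lt_S t p B n' Hw). lia. }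
  intros E. destruct (lt_eq_lt_dec m m') as [[H|H]|H]; auto;
    specialize (Hmono _ _ H); lia.
Qed.

Definition frontier (sg : list nat) (p : nat) : list nat :=
  restr (pad sg) (level (pad sg) p).

Definition grow (sg : list nat) (p m : nat) : list nat :=
  if excluded_middle_informative (determined sg p) then sg
  else frontier sg p ++ [ladder (frontier sg p) p (bound (frontier sg p)) m].

Lemma grow_determined sg p m : determined sg p -> grow sg p m = sg.
Proof. intros H. unfold grow. now destruct (excluded_middle_informative _). Qed.

Lemma grow_undetermined sg p m : ~ determined sg p ->
  grow sg p m = frontier sg p ++ [ladder (frontier sg p) p (bound (frontier sg p)) m].
Proof. intros H. unfold grow. now destruct (excluded_middle_informative _). Qed.

Lemma frontier_spec sg p : ~ determined sg p -> w (frontier sg p) p.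
Proof. intros H. apply (level_undetermined sg p H). Qed.

Lemma is_prefix_frontier sg p : ~ determined sg p -> is_prefix sg (frontier sg p).
Proof.
  intros Hund. destruct (level_undetermined sg p Hund) as [_ Hl].
  unfold frontier. rewrite <- (restr_pad sg) at 1. now apply is_prefix_restr.
Qed.

Lemma is_prefix_grow sg p m : is_prefix sg (grow sg p m).
Proof.
  destruct (excluded_middle_informative (determined sg p)) as [H|H].
  - rewrite grow_determined by exact H. exists []. now rewrite app_nil_r.
  - rewrite grow_undetermined by exact H.
    apply is_prefix_trans with (frontier sg p); [now apply is_prefix_frontier|].
    eexists; reflexivity.
Qed.

Lemma length_grow sg p m : ~ determined sg p -> length sg < length (grow sg p m).
Proof.
  intros H. rewrite grow_undetermined by exact H.
  pose proof (is_prefix_length _ _ (is_prefix_frontier sg p H)).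
  rewrite length_app. simpl. lia.
Qed.

Lemma nice_point_snoc t a p : w t p -> nice_point (pad (t ++ [a])) p = s (t ++ [a]) p.
Proof.
  intros Hw. rewrite <- (restr_pad t), <- (restr_pad_snoc t a) in Hw by lia.
  rewrite (nice_point_level _ p _ Hw).
  replace (S (length t)) with (length (t ++ [a])) by (rewrite length_app; simpl; lia).
  now rewrite restr_pad.
Qed.

Lemma nice_point_grow sg p m : ~ determined sg p ->
  nice_point (pad (grow sg p m)) p =
  ladder (frontier sg p) p (bound (frontier sg p)) (S m).
Proof.
  intros H. rewrite grow_undetermined by exact H.
  apply nice_point_snoc, frontier_spec, H.
Qed.

Lemma determined_grow sg p m : determined (grow sg p m) p.
Proof.
  destruct (excluded_middle_informative (determined sg p)) as [H|H].
  - now rewrite grow_determined.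
  - right. rewrite grow_undetermined by exact H.
    exists (length (frontier sg p)). split; [rewrite length_app; simpl; lia|].
    rewrite restr_pad_snoc, restr_pad by lia. now apply frontier_spec.
Qed.

(* The pointer read next lies beyond [bound], hence is not yet determined. *)
Lemma undetermined_after_grow sg p m k : ~ determined sg p ->
  ~ determined (grow sg p m) (S (code k (nice_point (pad (grow sg p m)) p))).
Proof.
  intros H Hdet. rewrite nice_point_grow in Hdet by exact H.
  rewrite grow_undetermined in Hdet by exact H.
  apply determined_snoc_lt_bound in Hdet.
  pose proof (ladder_ge _ p (bound (frontier sg p)) (S m) (frontier_spec sg p H)).
  pose proof (code_ge k (ladder (frontier sg p) p (bound (frontier sg p)) (S m))). lia.
Qed.

(* A play builds [f] (the stage) and [chain y] for [y := nice_point f] together; the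
   state is the current stage and the position of [y] that [chain] reads next.  If that
   position is undetermined, the choice [m] picks the [m]-th extension on the ladder. *)
Definition advance (k : nat) (st : list nat * nat) (m : nat) : list nat * nat :=
  let sg := grow (fst st) (snd st) m in (sg, S (code k (nice_point (pad sg) (snd st)))).

Fixpoint run (z : baire) (k : nat) : list nat * nat :=
  match k with 0 => ([], 0) | S k => advance k (run z k) (z k) end.

Definition stage (z : baire) (k : nat) : list nat := fst (run z k).
Definition pos (z : baire) (k : nat) : nat := snd (run z k).
Definition play (z : baire) (k : nat) : nat := nice_point (pad (stage z (S k))) (pos z k).
Definition free (z : baire) (k : nat) : Prop := ~ determined (stage z k) (pos z k).

Lemma stage_S z k : stage z (S k) = grow (stage z k) (pos z k) (z k).
Proof. reflexivity. Qed.

Lemma pos_S z k : pos z (S k) = S (code k (play z k)).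
Proof. reflexivity. Qed.

Lemma advance_determined k st m m' : determined (fst st) (snd st) ->
  advance k st m = advance k st m'.
Proof. intros H. unfold advance. now rewrite !grow_determined. Qed.

Lemma free_S z k : free z k -> free z (S k).
Proof. intros H. unfold free. rewrite stage_S, pos_S. now apply undetermined_after_grow. Qed.

Lemma is_prefix_stage z k k' : k <= k' -> is_prefix (stage z k) (stage z k').
Proof.
  induction 1 as [|k' _ IH].
  - exists []. now rewrite app_nil_r.
  - eapply is_prefix_trans; [exact IH|]. rewrite stage_S. apply is_prefix_grow.
Qed.

Lemma run_local z z' k : (forall j, j < k -> z j = z' j) -> run z k = run z' k.
Proof.
  induction k as [|k IH]; intros H; [reflexivity|].
  simpl. rewrite IH by (intros; apply H; lia). now rewrite H by lia.
Qed.

Lemma play_of_run z z' k : run z k = run z' k -> z k = z' k -> play z k = play z' k.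
Proof. intros Hr Hz. unfold play, stage, pos. simpl. now rewrite Hr, Hz. Qed.

Lemma play_local z z' k : (forall j, j <= k -> z j = z' j) -> play z k = play z' k.
Proof.
  intros H. apply play_of_run; [|apply H; lia].
  apply run_local. intros j Hj. apply H. lia.
Qed.

Lemma play_free z k : free z k ->
  play z k = ladder (frontier (stage z k) (pos z k)) (pos z k)
                    (bound (frontier (stage z k) (pos z k))) (S (z k)).
Proof. intros H. unfold play. now rewrite stage_S, nice_point_grow. Qed.

Lemma play_gt z k : free z k -> z k < play z k.
Proof.
  intros H. rewrite play_free by exact H.
  pose proof (ladder_ge _ (pos z k) (bound (frontier (stage z k) (pos z k))) (S (z k))
                (frontier_spec _ _ H)). lia.
Qed.

(* On a free step the choice [z k] can be read back from the value played. *)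
Lemma run_of_play z z' n : (forall j, j < n -> play z j = play z' j) -> run z n = run z' n.
Proof.
  induction n as [|n IH]; intros H; [reflexivity|].
  assert (Hn : run z n = run z' n) by (apply IH; intros; apply H; lia).
  assert (Hst : stage z n = stage z' n) by (unfold stage; now rewrite Hn).
  assert (Hpos : pos z n = pos z' n) by (unfold pos; now rewrite Hn).
  simpl. rewrite Hn.
  destruct (excluded_middle_informative (free z n)) as [Hfree|Hdet].
  - assert (Hfree' : free z' n) by (unfold free; now rewrite <- Hst, <- Hpos).
    specialize (H n ltac:(lia)). rewrite !play_free, <- Hst, <- Hpos in H by assumption.
    apply ladder_inj in H; [|now apply frontier_spec]. now injection H as ->.
  - apply advance_determined. unfold free in Hdet. rewrite Hst, Hpos in Hdet. now apply NNPP.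
Qed.

Lemma nice_point_pos z f k : extends f (stage z (S k)) -> nice_point f (pos z k) = play z k.
Proof.
  intros Hf. apply nice_point_determined; [|exact Hf].
  rewrite stage_S. apply determined_grow.
Qed.

Lemma chain_nice_point z f : (forall k, extends f (stage z k)) ->
  forall k, chain (nice_point f) k = play z k.
Proof.
  intros Hf.
  assert (Hpos : forall k, chain (nice_point f) k = nice_point f (pos z k)).
  { induction k as [|k IH]; [reflexivity|].
    simpl. rewrite IH, nice_point_pos by apply Hf. now rewrite pos_S. }
  intros k. rewrite Hpos. apply nice_point_pos, Hf.
Qed.

Lemma play_diagonal (x : baire) (zs : nat -> baire) :
  (forall n, restr x n = restr (play (zs n)) n) ->
  forall j, play (fun k => zs (S k) k) j = x j.
Proof.
  intros Hzs j. induction j as [j IH] using lt_wf_ind.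
  rewrite (restr_eq_at _ _ (S j) j (Hzs (S j))) by lia.
  apply play_of_run; [|reflexivity].
  apply run_of_play. intros i Hi. rewrite IH by exact Hi.
  apply (restr_eq_at _ _ _ _ (Hzs (S j))). lia.
Qed.

Lemma exists_free z : exists k, free z k.
Proof.
  destruct Hnice as [[N0 HN0] _].
  apply NNPP. intros Hnone.
  assert (Hdet : forall k, determined (stage z k) (pos z k)).
  { intros k. apply NNPP. intros Hk. apply Hnone. now exists k. }
  assert (Hrun : forall k, stage z k = [] /\ k <= pos z k).
  { induction k as [|k [Hst Hk]]; [split; [reflexivity|lia]|].
    rewrite stage_S, pos_S, grow_determined by apply Hdet. split; [exact Hst|].
    pose proof (code_ge k (play z k)). lia. }
  destruct (Hrun N0) as [Hst Hk]. specialize (Hdet N0). rewrite Hst in Hdet.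
  destruct Hdet as [Hd|[j [Hj _]]]; [specialize (HN0 _ Hd); lia|simpl in Hj; lia].
Qed.

Definition plays (t : list nat) : Prop := exists z, t = restr (play z) (length t).

Section LaverTree.
Variables (z0 : baire) (K : nat).
Hypothesis free_K : free z0 K.
Hypothesis forced_before_K : forall j, j < K -> ~ free z0 j.

Lemma run_forced z k : k <= K -> run z k = run z0 k.
Proof.
  induction k as [|k IH]; intros Hk; [reflexivity|].
  simpl. rewrite IH by lia. apply advance_determined, NNPP, forced_before_K. lia.
Qed.

Lemma play_forced z j : j < K -> play z j = play z0 j.
Proof.
  intros Hj. unfold play, stage, pos. now rewrite (run_forced z (S j)), (run_forced z j) by lia.
Qed.

Lemma free_from_K z k : K <= k -> free z k.
Proof.
  induction 1 as [|k _ IH]; [|now apply free_S].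
  unfold free, stage, pos. now rewrite run_forced.
Qed.

Lemma length_stage z j : j <= length (stage z (K + j)).
Proof.
  induction j as [|j IH]; [lia|].
  rewrite Nat.add_succ_r, stage_S.
  pose proof (length_grow _ _ (z (K + j)) (free_from_K z (K + j) ltac:(lia))). lia.
Qed.

Lemma plays_tree : is_tree plays.
Proof.
  intros a t [z Hz] Ha. exists z. rewrite Hz in Ha. exact (is_prefix_restr_inv _ _ _ Ha).
Qed.

Lemma plays_comparable t : plays t ->
  is_prefix t (restr (play z0) K) \/ is_prefix (restr (play z0) K) t.
Proof.
  intros [z Hz]. destruct (le_lt_dec (length t) K) as [Hle|Hlt].
  - left. replace t with (restr (play z0) (length t)).
    + now apply is_prefix_restr.
    + rewrite Hz at 2. apply restr_ext. intros i Hi. symmetry. apply play_forced. lia.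
  - right. rewrite Hz. replace (restr (play z0) K) with (restr (play z) K).
    + apply is_prefix_restr. lia.
    + apply restr_ext. intros i Hi. apply play_forced. lia.
Qed.

Lemma plays_split t : plays t -> is_prefix (restr (play z0) K) t ->
  forall N, exists n, N <= n /\ plays (t ++ [n]).
Proof.
  intros [z Hz] Hstem N. set (k := length t).
  assert (Hk : K <= k).
  { pose proof (is_prefix_length _ _ Hstem) as Hl. now rewrite restr_length in Hl. }
  set (z' := fun j => if j <? k then z j else N).
  assert (Hz' : forall j, j < k -> z' j = z j).
  { intros j Hj. unfold z'. now rewrite (proj2 (Nat.ltb_lt j k) Hj). }
  assert (Hz'k : z' k = N) by (unfold z'; now rewrite Nat.ltb_irrefl).
  exists (play z' k). split.
  - pose proof (play_gt z' k (free_from_K z' k Hk)). lia.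
  - exists z'. rewrite length_app, Nat.add_1_r, restr_S. fold k. f_equal.
    rewrite Hz. apply restr_ext. intros i Hi. symmetry. apply play_local.
    intros j Hj. apply Hz'. lia.
Qed.

Lemma laver_tree_plays : laver_tree plays.
Proof.
  split; [exact plays_tree|].
  exists (restr (play z0) K). split; [|split].
  - exists z0. now rewrite restr_length.
  - exact plays_comparable.
  - exact plays_split.
Qed.

Lemma body_plays x : body plays x ->
  exists y, nice_set dom0 w s y /\ forall k, chain y k = x k.
Proof.
  intros Hx.
  destruct (choice (fun n z => restr x n = restr (play z) n)) as [zs Hzs].
  { intros n. destruct (Hx n) as [z Hz]. rewrite restr_length in Hz. now exists z. }
  set (z := fun k => zs (S k) k).
  destruct (prefix_chain_limit (stage z) (fun i => K + S i)) as [f Hf].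
  - apply is_prefix_stage.
  - intros i. apply (length_stage z (S i)).
  - exists (nice_point f). split; [apply nice_point_in_nice_set|].
    intros k. rewrite (chain_nice_point z f Hf). now apply play_diagonal.
Qed.

End LaverTree.

Lemma laver_tree_in_chain_image : exists L, laver_tree L /\
  forall x, body L x -> exists y, nice_set dom0 w s y /\ chain y = x.
Proof.
  set (z0 := fun _ : nat => 0).
  destruct (dec_inh_nat_subset_has_unique_least_element (free z0)) as [K [[HK Hleast] _]].
  - intros n. apply classic.
  - apply exists_free.
  - assert (Hforced : forall j, j < K -> ~ free z0 j).
    { intros j Hj Hfree. specialize (Hleast j Hfree). lia. }
    exists plays. split; [exact (laver_tree_plays z0 K HK Hforced)|].
    intros x Hx. destruct (body_plays z0 K HK Hforced x Hx) as [y [Hy Hyx]].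
    exists y. split; [exact Hy|]. now apply functional_extensionality.
Qed.

End NiceSet.

Theorem proposition3p7 (G : pointclass) :
  topologically_reasonable G ->
  (forall A : pointset, G A -> strongly_u_regular A) ->
  forall A : pointset, G A -> l_regular A.
Proof.
  intros [Hpreimage _] Hreg A HA.
  destruct (classic (strongly_dominating A)) as [Hsd|Hnsd]; [left|now right].
  assert (Hchain : G (fun y => A (chain y))).
  { apply Hpreimage; [exact HA|exact chain_continuous]. }
  destruct (Hreg _ Hchain) as [[dom0 [w [s [Hnice Hsub]]]]|Hndom].
  - destruct (laver_tree_in_chain_image dom0 w s Hnice) as [L [HL Hbody]].
    exists L. split; [exact HL|].
    intros x Hx. destruct (Hbody x Hx) as [y [Hy <-]]. exact (Hsub y Hy).
  - destruct (Hndom (dominating_chain_preimage A Hsd)).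
Qed.
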